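(* Suppose $A,B\in M_N(\mathbb C)$ are simultaneously diagonalizable, with a common basis of eigenvectors $v_1,\dots,v_N$, $Av_i=\lambda_iv_i$, $Bv_i=\gamma_iv_i$, all $\lambda_i$ real and positive, and put $\mu_i=\gamma_i/\lambda_i$. If $|\mu_i|<1$ for every $i=1,\dots,N$, then for every $\theta\in(1/2,1]$ the $\theta$-method with $u=0$ is unconditionally stable, i.e. stable for every step size $h=\tau/m$, $m\in\mathbb N$.
   Context: Let $\tau>0$ and consider $y'(t)=-Ay(t)+By(t-\tau)$. For $u=0$, $\theta\in[0,1]$, $m\in\mathbb N$ and $h=\tau/m$, the $\theta$-method is the recursion, for $n\ge0$ and arbitrary starting values $y_{-m},\dots,y_0\in\mathbb C^N$, $$y_{n+1}=y_n+h(1-\theta)\big[-Ay_n+By_{n-m}\big]+h\theta\big[-Ay_{n+1}+By_{n-m+1}\big].$$ It is called stable (for that $h$) if $y_n\to0$ as $n\to\infty$ for every choice of starting values. *)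

From HB Require Import structures.
From mathcomp Require Import all_boot all_order all_algebra.
From mathcomp Require Import complex.
From mathcomp Require Import reals.
Set Implicit Arguments. Unset Strict Implicit. Unset Printing Implicit Defensive.
Import Order.TTheory GRing.Theory Num.Theory.
Local Open Scope ring_scope.
Local Open Scope complex_scope.

(* The theta-method for y' = -A y + B y(t - tau), u = 0, step h = tau/m,
   with the index shift z k = y_(k - m), so that z 0, ..., z m are the
   starting values y_(-m), ..., y_0 and, for n >= 0,
   y_(n+1) = z (n+m+1), y_n = z (n+m), y_(n-m) = z n, y_(n-m+1) = z (n+1). *)
Definition theta_method_seq (R : realType) (N : nat) (A B : 'M[R[i]]_N)
    (h theta : R) (m : nat) (z : nat -> 'cV[R[i]]_N) : Prop :=
  forall n : nat,
    z (n + m).+1 =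
      z (n + m)%N
      + (h * (1 - theta))%:C *: (- (A *m z (n + m)%N) + B *m z n)
      + (h * theta)%:C *: (- (A *m z (n + m).+1) + B *m z n.+1).

Definition seq_tends_to_zero (R : realType) (N : nat)
    (z : nat -> 'cV[R[i]]_N) : Prop :=
  forall eps : R, 0 < eps ->
    exists n0 : nat, forall n : nat, (n0 <= n)%N ->
      forall i : 'I_N, `|z n i ord0| < eps%:C.

Definition theta_method_stable (R : realType) (N : nat) (A B : 'M[R[i]]_N)
    (tau theta : R) (m : nat) : Prop :=
  forall z : nat -> 'cV[R[i]]_N,
    theta_method_seq A B (tau / m%:R) theta m z -> seq_tends_to_zero z.

From HB Require Import structures.
From mathcomp Require Import all_boot all_order all_algebra.
From mathcomp Require Import complex.
From mathcomp Require Import boolp classical_sets reals.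
From mathcomp Require Import ring lra.
Set Implicit Arguments. Unset Strict Implicit. Unset Printing Implicit Defensive.
Import Order.TTheory GRing.Theory Num.Theory.
Local Open Scope ring_scope.
Local Open Scope complex_scope.

(* Diagonalise: in the eigenbasis V, each coordinate x of the solution obeys
   the scalar recursion with multipliers lambda > 0 and gamma, |gamma| < lambda.
   For a scalar solution, with Y_k = theta x_(k+1) + (1 - theta) x_k and any
   c in (|gamma|, lambda), the functional
     L_n = |x_(n+m)|^2 + h c (|Y_n|^2 + ... + |Y_(n+m-1)|^2)
   decreases by at least a fixed multiple of |x_(n+m)|^2 at every step: the
   delayed term gamma Y_n is absorbed by Cauchy-Schwarz into the window sum, and
   theta > 1/2 makes the increment term (1 - 2 theta) |x_(k+1) - x_k|^2 negative.
   Hence |x_n| -> 0, and z = V x -> 0. *)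

Lemma lyapunov_vanishing (R : realType) (V t : nat -> R) :
  (forall n, 0 <= V n) -> (forall n, 0 <= t n) -> (forall n, V n.+1 + t n <= V n) ->
  forall eps, 0 < eps -> exists n0, forall n, (n0 <= n)%N -> t n < eps.
Proof.
move=> V_ge0 t_ge0 V_dec eps eps_gt0.
have V_nonincr n k : V (n + k)%N <= V n.
  elim: k => [|k IH]; first by rewrite addn0.
  by rewrite addnS; apply: le_trans IH; have := V_dec (n + k)%N; have := t_ge0 (n + k)%N; lra.
have infV : has_inf (range V).
  by split; [exists (V 0%N), 0%N | exists 0 => _ [k _ <-]].
have [_ [n0 _ <-] Vn0_lt] := inf_adherent eps_gt0 infV.
exists n0 => n /subnK <-.
have inf_le : inf (range V) <= V (n - n0 + n0).+1 by apply: ge_inf; [case: infV | exists (n - n0 + n0).+1].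
have := V_nonincr n0 (n - n0)%N; rewrite addnC => Vn_le.
have := V_dec (n - n0 + n0)%N; lra.
Qed.

(* Cauchy-Schwarz for Re(conj Y * gamma Z) with gamma = g1 + i g2, |gamma| <= c, then AM-GM. *)
Lemma dot_rotation_le (R : realFieldType) (c g1 g2 Yp Yq Zp Zq : R) :
  0 < c -> g1 ^+ 2 + g2 ^+ 2 <= c ^+ 2 ->
  2 * (Yp * (g1 * Zp - g2 * Zq) + Yq * (g1 * Zq + g2 * Zp))
    <= c * (Yp ^+ 2 + Yq ^+ 2 + (Zp ^+ 2 + Zq ^+ 2)).
Proof.
move=> c_gt0 g_le.
set w1 := g1 * Zp - g2 * Zq; set w2 := g1 * Zq + g2 * Zp.
have w_sqr : w1 ^+ 2 + w2 ^+ 2 = (g1 ^+ 2 + g2 ^+ 2) * (Zp ^+ 2 + Zq ^+ 2) by rewrite /w1 /w2; ring.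
have w_le : w1 ^+ 2 + w2 ^+ 2 <= c ^+ 2 * (Zp ^+ 2 + Zq ^+ 2).
  by rewrite w_sqr ler_wpM2r // addr_ge0 // sqr_ge0.
have sq_ge0 : 0 <= (w1 - c * Yp) ^+ 2 + (w2 - c * Yq) ^+ 2 by rewrite addr_ge0 // sqr_ge0.
rewrite -(ler_pM2l c_gt0).
have -> : c * (2 * (Yp * w1 + Yq * w2)) = (w1 ^+ 2 + w2 ^+ 2) + c ^+ 2 * (Yp ^+ 2 + Yq ^+ 2)
    - ((w1 - c * Yp) ^+ 2 + (w2 - c * Yq) ^+ 2) by ring.
have -> : c * (c * (Yp ^+ 2 + Yq ^+ 2 + (Zp ^+ 2 + Zq ^+ 2))) =
    c ^+ 2 * (Yp ^+ 2 + Yq ^+ 2) + c ^+ 2 * (Zp ^+ 2 + Zq ^+ 2) by ring.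
lra.
Qed.

Lemma theta_step_energy (R : realFieldType) (l g1 g2 h th c P0 P1 Q0 Q1 Pd0 Pd1 Qd0 Qd1 : R) :
  0 < c -> g1 ^+ 2 + g2 ^+ 2 <= c ^+ 2 -> 0 <= h ->
  P1 = P0 + h * (1 - th) * (- (l * P0) + (g1 * Pd0 - g2 * Qd0))
          + h * th * (- (l * P1) + (g1 * Pd1 - g2 * Qd1)) ->
  Q1 = Q0 + h * (1 - th) * (- (l * Q0) + (g1 * Qd0 + g2 * Pd0))
          + h * th * (- (l * Q1) + (g1 * Qd1 + g2 * Pd1)) ->
  (P1 ^+ 2 + Q1 ^+ 2) - (P0 ^+ 2 + Q0 ^+ 2) <=
   - (2 * h * l) * ((th * P1 + (1 - th) * P0) ^+ 2 + (th * Q1 + (1 - th) * Q0) ^+ 2)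
   + h * c * (((th * P1 + (1 - th) * P0) ^+ 2 + (th * Q1 + (1 - th) * Q0) ^+ 2)
              + ((th * Pd1 + (1 - th) * Pd0) ^+ 2 + (th * Qd1 + (1 - th) * Qd0) ^+ 2))
   - (2 * th - 1) * ((P1 - P0) ^+ 2 + (Q1 - Q0) ^+ 2).
Proof.
move=> c_gt0 g_le h_ge0 eP eQ.
set Yp := th * P1 + (1 - th) * P0; set Yq := th * Q1 + (1 - th) * Q0.
set Zp := th * Pd1 + (1 - th) * Pd0; set Zq := th * Qd1 + (1 - th) * Qd0.
have diff_sqr : (P1 ^+ 2 + Q1 ^+ 2) - (P0 ^+ 2 + Q0 ^+ 2) =
    2 * (Yp * (P1 - P0) + Yq * (Q1 - Q0)) - (2 * th - 1) * ((P1 - P0) ^+ 2 + (Q1 - Q0) ^+ 2).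
  by rewrite /Yp /Yq; ring.
have incr : Yp * (P1 - P0) + Yq * (Q1 - Q0) =
    h * (- l * (Yp ^+ 2 + Yq ^+ 2) + (Yp * (g1 * Zp - g2 * Zq) + Yq * (g1 * Zq + g2 * Zp))).
  have -> : P1 - P0 = h * (- (l * Yp) + (g1 * Zp - g2 * Zq)) by rewrite {1}eP /Yp /Zp /Zq; ring.
  have -> : Q1 - Q0 = h * (- (l * Yq) + (g1 * Zq + g2 * Zp)) by rewrite {1}eQ /Yq /Zp /Zq; ring.
  ring.
have := ler_wpM2l h_ge0 (dot_rotation_le Yp Yq Zp Zq c_gt0 g_le).
rewrite diff_sqr incr.
move: (Yp * _ + Yq * _) => cross cross_le.
have -> : 2 * (h * (- l * (Yp ^+ 2 + Yq ^+ 2) + cross)) =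
    - (2 * h * l) * (Yp ^+ 2 + Yq ^+ 2) + h * (2 * cross) by ring.
rewrite mulrA in cross_le; lra.
Qed.

Lemma sqr_le_theta_average (R : realFieldType) (th P0 P1 Q0 Q1 : R) : 0 <= th <= 1 ->
  P0 ^+ 2 + Q0 ^+ 2 <= 2 * ((th * P1 + (1 - th) * P0) ^+ 2 + (th * Q1 + (1 - th) * Q0) ^+ 2)
    + 2 * ((P1 - P0) ^+ 2 + (Q1 - Q0) ^+ 2).
Proof.
move=> /andP[th_ge0 th_le1].
set Yp := th * P1 + (1 - th) * P0; set Yq := th * Q1 + (1 - th) * Q0.
set Dp := P1 - P0; set Dq := Q1 - Q0.
have -> : P0 ^+ 2 + Q0 ^+ 2 = 2 * (Yp ^+ 2 + Yq ^+ 2) + 2 * (th ^+ 2 * (Dp ^+ 2 + Dq ^+ 2))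
    - ((Yp + th * Dp) ^+ 2 + (Yq + th * Dq) ^+ 2) by rewrite /Yp /Yq /Dp /Dq; ring.
have : 0 <= (Yp + th * Dp) ^+ 2 + (Yq + th * Dq) ^+ 2 by rewrite addr_ge0 // sqr_ge0.
have : th ^+ 2 * (Dp ^+ 2 + Dq ^+ 2) <= Dp ^+ 2 + Dq ^+ 2.
  by rewrite ler_piMl ?addr_ge0 ?sqr_ge0 // expr_le1.
lra.
Qed.

Lemma exists_sqrt_between (R : realFieldType) (l G : R) :
  0 < l -> 0 <= G < l ^+ 2 -> exists c, [/\ 0 < c, c < l & G <= c ^+ 2].
Proof.
move=> l_gt0 /andP[G_ge0 G_lt].
have l2_gt0 : 0 < 2 * l by rewrite mulr_gt0.
exists ((l ^+ 2 + G) / (2 * l)); split.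
- by rewrite divr_gt0 // ltr_pwDl // exprn_gt0.
- by rewrite ltr_pdivrMr // (_ : l * (2 * l) = l ^+ 2 + l ^+ 2); [lra | ring].
- rewrite expr_div_n ler_pdivlMr ?exprn_gt0 // -subr_ge0.
  have -> : (l ^+ 2 + G) ^+ 2 - G * (2 * l) ^+ 2 = (l ^+ 2 - G) ^+ 2 by ring.
  exact: sqr_ge0.
Qed.

Lemma sum_window_shift (R : nmodType) (Y : nat -> R) (m n : nat) :
  \sum_(k < m) Y (n + k)%N + Y (n + m)%N = Y n + \sum_(k < m) Y (n.+1 + k)%N.
Proof.
rewrite -[LHS](big_ord_recr m (fun k => Y (n + k)%N)) big_ord_recl addn0.
by congr (_ + _); apply: eq_bigr => k _; rewrite addnS.
Qed.

Section ThetaPairRecursion.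
(* p and q are the real and imaginary parts of a scalar solution, gamma = g1 + i g2. *)
Variables (R : realType) (l g1 g2 h th c : R) (m : nat) (p q : nat -> R).
Hypotheses (c_gt0 : 0 < c) (c_lt_l : c < l) (g_le_c : g1 ^+ 2 + g2 ^+ 2 <= c ^+ 2).
Hypotheses (h_gt0 : 0 < h) (th_gt : 1 / 2 < th) (th_le1 : th <= 1).
Hypothesis p_rec : forall n, p (n + m).+1 = p (n + m)%N
  + h * (1 - th) * (- (l * p (n + m)%N) + (g1 * p n - g2 * q n))
  + h * th * (- (l * p (n + m).+1) + (g1 * p n.+1 - g2 * q n.+1)).
Hypothesis q_rec : forall n, q (n + m).+1 = q (n + m)%N
  + h * (1 - th) * (- (l * q (n + m)%N) + (g1 * q n + g2 * p n))
  + h * th * (- (l * q (n + m).+1) + (g1 * q n.+1 + g2 * p n.+1)).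

Let energy k := p k ^+ 2 + q k ^+ 2.
Let avg_energy k := (th * p k.+1 + (1 - th) * p k) ^+ 2 + (th * q k.+1 + (1 - th) * q k) ^+ 2.
Let incr_energy k := (p k.+1 - p k) ^+ 2 + (q k.+1 - q k) ^+ 2.
Let lyap n := energy (n + m)%N + h * c * \sum_(k < m) avg_energy (n + k)%N.
Let rate := Num.min (2 * h * (l - c)) (2 * th - 1) / 2.

Let rate_gt0 : 0 < rate.
Proof.
have two_th_gt1 : 1 < 2 * th by move: th_gt; lra.
by rewrite divr_gt0 // lt_min mulr_gt0 ?mulr_gt0 ?subr_gt0.
Qed.

Let lyap_ge0 n : 0 <= lyap n.
Proof.
rewrite addr_ge0 ?addr_ge0 ?sqr_ge0 // !mulr_ge0 ?(ltW h_gt0) ?(ltW c_gt0) //.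
by apply: sumr_ge0 => k _; rewrite addr_ge0 ?sqr_ge0.
Qed.

Let lyap_decrease n : lyap n.+1 + rate * energy (n + m)%N <= lyap n.
Proof.
have step := theta_step_energy c_gt0 g_le_c (ltW h_gt0) (p_rec n) (q_rec n).
have avg := @sqr_le_theta_average _ th (p (n + m)%N) (p (n + m).+1) (q (n + m)%N) (q (n + m).+1).
have energy_le : energy (n + m)%N <= 2 * avg_energy (n + m)%N + 2 * incr_energy (n + m)%N.
  by apply: avg; move: th_gt th_le1; lra.
have window := sum_window_shift avg_energy m n.
have rate_a : 2 * rate <= 2 * h * (l - c) by rewrite mulrC divfK ?ge_min ?lexx // pnatr_eq0.
have rate_b : 2 * rate <= 2 * th - 1 by rewrite mulrC divfK ?ge_min ?lexx ?orbT // pnatr_eq0.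
have avg_ge0 : 0 <= avg_energy (n + m)%N by rewrite addr_ge0 ?sqr_ge0.
have incr_ge0 : 0 <= incr_energy (n + m)%N by rewrite addr_ge0 ?sqr_ge0.
rewrite /lyap addSn; move: step energy_le window rate_a rate_b avg_ge0 incr_ge0 rate_gt0.
rewrite -/(energy _) -/(energy _) -/(avg_energy _) -/(avg_energy _) -/(incr_energy _).
move: (energy _) (energy _) (avg_energy _) (avg_energy _) (incr_energy _) rate.
move: (\sum_(k < m) _) (\sum_(k < m) _) => S1 S0 E1 E0 Y0 Ym D r.
move=> step energy_le window rate_a rate_b Ym_ge0 D_ge0 r_gt0.
have rE1_le : r * E1 <= 2 * h * (l - c) * Ym + (2 * th - 1) * D.
  have := ler_wpM2l (ltW r_gt0) energy_le.
  have := ler_wpM2r Ym_ge0 rate_a; have := ler_wpM2r D_ge0 rate_b.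
  lra.
have := congr1 (fun S => h * c * S) window.
move: step rE1_le; lra.
Qed.

Lemma theta_pair_energy_vanishing eps : 0 < eps ->
  exists n0, forall n, (n0 <= n)%N -> p n ^+ 2 + q n ^+ 2 < eps.
Proof.
move=> eps_gt0.
have rate_energy_ge0 n : 0 <= rate * energy (n + m)%N.
  by rewrite mulr_ge0 ?(ltW rate_gt0) // addr_ge0 ?sqr_ge0.
have [n0 n0P] := lyapunov_vanishing lyap_ge0 rate_energy_ge0 lyap_decrease (mulr_gt0 rate_gt0 eps_gt0).
exists (n0 + m)%N => n n_ge.
have m_le_n : (m <= n)%N by apply: leq_trans n_ge; rewrite leq_addl.
have := n0P (n - m)%N; rewrite subnK // ltr_pM2l //; apply.
by rewrite leq_subRL // addnC.
Qed.

End ThetaPairRecursion.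

Lemma theta_recursion_Re (R : rcfType) (l c1 c2 : R) (g y0 y1 yd0 yd1 : R[i]) :
  y1 = y0 + c1%:C * (- (l%:C * y0) + g * yd0) + c2%:C * (- (l%:C * y1) + g * yd1) ->
  complex.Re y1 = complex.Re y0
    + c1 * (- (l * complex.Re y0) + (complex.Re g * complex.Re yd0 - complex.Im g * complex.Im yd0))
    + c2 * (- (l * complex.Re y1) + (complex.Re g * complex.Re yd1 - complex.Im g * complex.Im yd1)).
Proof.
case: g y0 y1 yd0 yd1 => [g1 g2] [a0 b0] [a1 b1] [p0 q0] [p1 q1].
by move=> /(congr1 (@complex.Re R)) /= y1E; rewrite {1}y1E; ring.
Qed.

Lemma theta_recursion_Im (R : rcfType) (l c1 c2 : R) (g y0 y1 yd0 yd1 : R[i]) :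
  y1 = y0 + c1%:C * (- (l%:C * y0) + g * yd0) + c2%:C * (- (l%:C * y1) + g * yd1) ->
  complex.Im y1 = complex.Im y0
    + c1 * (- (l * complex.Im y0) + (complex.Re g * complex.Im yd0 + complex.Im g * complex.Re yd0))
    + c2 * (- (l * complex.Im y1) + (complex.Re g * complex.Im yd1 + complex.Im g * complex.Re yd1)).
Proof.
case: g y0 y1 yd0 yd1 => [g1 g2] [a0 b0] [a1 b1] [p0 q0] [p1 q1].
by move=> /(congr1 (@complex.Im R)) /= y1E; rewrite {1}y1E; ring.
Qed.

Lemma ltc_norm_real (R : rcfType) (z : R[i]) (r : R) : 0 <= r ->
  (`|z| < r%:C) = (complex.Re z ^+ 2 + complex.Im z ^+ 2 < r ^+ 2).
Proof.
move=> r_ge0; rewrite -ltcR add_Re2_Im2 rmorphXn /=.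
by rewrite ltr_pXn2r // !nnegrE ?normr_ge0 ?ler0c.
Qed.

Lemma theta_scalar_vanishing (R : realType) (l h th : R) (g : R[i]) (m : nat) (x : nat -> R[i]) :
  0 < l -> `|g| < l%:C -> 0 < h -> 1 / 2 < th <= 1 ->
  (forall n, x (n + m).+1 = x (n + m)%N
     + (h * (1 - th))%:C * (- (l%:C * x (n + m)%N) + g * x n)
     + (h * th)%:C * (- (l%:C * x (n + m).+1) + g * x n.+1)) ->
  forall eps, 0 < eps -> exists n0, forall n, (n0 <= n)%N -> `|x n| < eps%:C.
Proof.
move=> l_gt0 g_lt h_gt0 /andP[th_gt th_le1] x_rec eps eps_gt0.
have g_sqr : complex.Re g ^+ 2 + complex.Im g ^+ 2 < l ^+ 2.
  by rewrite -ltc_norm_real ?ltW.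
have [c [c_gt0 c_lt_l g_le_c]] :
    exists c, [/\ 0 < c, c < l & complex.Re g ^+ 2 + complex.Im g ^+ 2 <= c ^+ 2].
  by apply: exists_sqrt_between; rewrite // g_sqr addr_ge0 ?sqr_ge0.
have [n0 n0P] := theta_pair_energy_vanishing c_gt0 c_lt_l g_le_c h_gt0 th_gt th_le1
  (fun n => theta_recursion_Re (x_rec n)) (fun n => theta_recursion_Im (x_rec n))
  (exprn_gt0 2 eps_gt0).
exists n0 => n /n0P.
by rewrite ltc_norm_real ?ltW.
Qed.

Lemma invmx_eigen_coord (K : fieldType) (N : nat) (V M : 'M[K]_N) (mu : 'I_N -> K) :
  V \in unitmx -> (forall j, M *m col j V = mu j *: col j V) ->
  forall (y : 'cV[K]_N) j, (invmx V *m (M *m y)) j ord0 = mu j * (invmx V *m y) j ord0.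
Proof.
move=> V_unit M_eigen y j.
have MV : M *m V = V *m diag_mx (\row_j mu j).
  apply/matrixP => i k; rewrite mul_mx_diag !mxE mulrC.
  have := congr1 (fun v : 'cV_N => v i ord0) (M_eigen k); rewrite !mxE /= => <-.
  by apply: eq_bigr => l _; rewrite !mxE.
have VM : invmx V *m M = diag_mx (\row_j mu j) *m invmx V.
  by rewrite -[LHS]mulmx1 -(mulmxV V_unit) mulmxA -(mulmxA _ M) MV mulmxA mulVmx ?mul1mx.
by rewrite mulmxA VM -mulmxA mul_diag_mx !mxE.
Qed.

Lemma theta_method_coord (R : realType) (N : nat) (A B V : 'M[R[i]]_N) (lam gam : 'I_N -> R[i])
    (h th : R) (m : nat) (z : nat -> 'cV[R[i]]_N) :
  V \in unitmx ->
  (forall j, A *m col j V = lam j *: col j V) -> (forall j, B *m col j V = gam j *: col j V) ->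
  theta_method_seq A B h th m z ->
  forall j n, let x k := (invmx V *m z k) j ord0 in
  x (n + m).+1 = x (n + m)%N
     + (h * (1 - th))%:C * (- (lam j * x (n + m)%N) + gam j * x n)
     + (h * th)%:C * (- (lam j * x (n + m).+1) + gam j * x n.+1).
Proof.
move=> V_unit A_eigen B_eigen z_rec j n x.
rewrite /x -!(invmx_eigen_coord V_unit A_eigen) -!(invmx_eigen_coord V_unit B_eigen).
by rewrite {1}z_rec !mulmxDr -!scalemxAr !mulmxDr !mulmxN !mxE.
Qed.

Lemma seq_tends_to_zero_coord (R : realType) (N : nat) (y : nat -> 'cV[R[i]]_N) :
  (forall i eps, 0 < eps -> exists n0, forall n, (n0 <= n)%N -> `|y n i ord0| < eps%:C) ->
  seq_tends_to_zero y.
Proof.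
move=> y_coord eps eps_gt0.
have [n0 n0P] := fin_all_exists (fun i => y_coord i eps eps_gt0).
by exists (\max_i n0 i) => n n_ge i; apply: n0P; apply: leq_trans n_ge; apply: leq_bigmax.
Qed.

Lemma seq_tends_to_zero_mulmx (R : realType) (N : nat) (V : 'M[R[i]]_N) (y : nat -> 'cV[R[i]]_N) :
  seq_tends_to_zero y -> seq_tends_to_zero (fun n => V *m y n).
Proof.
move=> y_lim; apply: seq_tends_to_zero_coord => i eps eps_gt0.
pose s := complex.Re (\sum_j `|V i j|).
have sE : s%:C = \sum_j `|V i j| by rewrite RRe_real // ger0_real // sumr_ge0.
have s_ge0 : 0 <= s by rewrite -ler0c sE sumr_ge0.
have [n0 n0P] := y_lim (eps / (s + 1)) (divr_gt0 eps_gt0 (ltr_wpDl s_ge0 ltr01)).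
exists n0 => n /n0P y_small; rewrite mxE.
apply: le_lt_trans (ler_norm_sum _ _ _) _.
apply: (@le_lt_trans _ _ (s%:C * (eps / (s + 1))%:C)).
  by rewrite sE mulr_suml; apply: ler_sum => j _; rewrite normrM ler_wpM2l // ltW.
rewrite -rmorphM ltcR mulrA ltr_pdivrMr ?ltr_wpDl //; lra.
Qed.

Theorem mainTheorem13 (R : realType) (N : nat) (A B : 'M[R[i]]_N)
    (tau : R) (V : 'M[R[i]]_N) (lam gam : 'I_N -> R[i]) :
  0 < tau ->
  V \in unitmx ->
  (forall j : 'I_N, A *m col j V = lam j *: col j V) ->
  (forall j : 'I_N, B *m col j V = gam j *: col j V) ->
  (forall j : 'I_N, lam j \is Num.real /\ 0 < lam j) ->
  (forall j : 'I_N, `|gam j / lam j| < 1) ->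
  forall theta : R, 1 / 2 < theta <= 1 ->
  forall m : nat, (0 < m)%N ->
    theta_method_stable A B tau theta m.
Proof.
move=> tau_gt0 V_unit A_eigen B_eigen lam_pos mu_lt1 theta theta_range m m_gt0 z z_rec.
have h_gt0 : 0 < tau / m%:R by rewrite divr_gt0 // ltr0n.
have -> : z = fun n => V *m (invmx V *m z n).
  by apply: funext => n; rewrite mulmxA mulmxV ?mul1mx.
apply/seq_tends_to_zero_mulmx/seq_tends_to_zero_coord => j.
have [lam_real lam_gt0] := lam_pos j.
have lamE : (complex.Re (lam j))%:C = lam j by rewrite RRe_real.
have gam_lt : `|gam j| < (complex.Re (lam j))%:C.
  by move: (mu_lt1 j); rewrite lamE normrM normfV ltr_pdivrMr ?normr_gt0 ?gt_eqF // mul1r (gtr0_norm lam_gt0).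
apply: (theta_scalar_vanishing _ gam_lt h_gt0 theta_range).
- by rewrite -ltcR lamE.
- by move=> n; rewrite lamE; apply: (theta_method_coord V_unit A_eigen B_eigen z_rec).
Qed.
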